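(* Let $k$ be a field, $A, B$ $k$-algebras, $n \ge 1$, and $f: A \to M_n(B)$ a $k$-algebra homomorphism; let $f': \sqrt[n]{A} \to B$ be the homomorphism corresponding to $f$ under the adjunction, i.e. $f = M_n(f')\mu_{A,n}$. The following are equivalent: (i) $f$ is an epimorphism (of $k$-algebras); (ii) the dominion of $f(A)$ in $M_n(B)$ contains all matrix units $e_{ij}$, $1 \le i,j \le n$, and $f'$ is an epimorphism; (iii) $\sqrt[n]{f}: \sqrt[n]{A} \to \sqrt[n]{M_n(B)}$ is an epimorphism.
   Context: The $n$-matrix reduction functor $\sqrt[n]{-}: k\text{-}\mathsf{Alg} \to k\text{-}\mathsf{Alg}$ is the left adjoint of $M_n(-): k\text{-}\mathsf{Alg} \to k\text{-}\mathsf{Alg}$, with unit $\mu_{A,n}: A \to M_n(\sqrt[n]{A})$ such that every $k$-algebra map $f: A \to M_n(C)$ factors uniquely as $M_n(f')\mu_{A,n}$ with $f': \sqrt[n]{A} \to C$. An epimorphism $\varphi: R\to S$ is a map such that any two maps out of $S$ agreeing after composition with $\varphi$ are equal. For a subring $D \subseteq E$, the dominion of $D$ in $E$ is the largest subset of $E$ on which any two ring homomorphisms from $E$ that agree on $D$ must agree. *)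

From HB Require Import structures.
From mathcomp Require Import all_boot all_order all_algebra.
Set Implicit Arguments. Unset Strict Implicit. Unset Printing Implicit Defensive.
Import GRing.Theory.
Local Open Scope ring_scope.

Record kalg (k : fieldType) := KAlg {
  kcar :> pzRingType;
  kemb : {rmorphism k -> kcar};
  kemb_central : forall (c : k) (x : kcar), kemb c * x = x * kemb c
}.

Record khom (k : fieldType) (A B : kalg k) := KHom {
  khfun :> {rmorphism A -> B};
  khomP : forall c : k, khfun (kemb A c) = kemb B c
}.

Lemma scalar_mx_central (R : pzRingType) (n : nat) (a : R)
  (Ha : forall x : R, a * x = x * a) (x : 'M[R]_n) :
  a%:M *m x = x *m a%:M.
Proof.
apply/matrixP => i j; rewrite !mxE.
rewrite (bigD1 i) //= big1 ?addr0; last first.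
  by move=> l /negbTE nli; rewrite mxE eq_sym nli mulr0n mul0r.
rewrite (bigD1 j) //= big1 ?addr0; last first.
  by move=> l /negbTE nlj; rewrite mxE nlj mulr0n mulr0.
by rewrite !mxE !eqxx !mulr1n Ha.
Qed.

Definition matk (k : fieldType) (B : kalg k) (n : nat) : kalg k :=
  @KAlg k 'M[B]_n ((scalar_mx : B -> 'M[B]_n) \o kemb B)
    (fun c x => scalar_mx_central (kemb_central c) x).

Definition kepi (k : fieldType) (R S : kalg k) (phi : khom R S) : Prop :=
  forall (C : kalg k) (g h : khom S C),
    (forall r : R, g (phi r) = h (phi r)) -> forall s : S, g s = h s.

Definition in_dominion (E : pzRingType) (D : E -> Prop) (x : E) : Prop :=
  forall (C : pzRingType) (g h : {rmorphism E -> C}),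
    (forall d : E, D d -> g d = h d) -> g x = h x.

(* (R, mu) is an n-matrix reduction of A: mu : A -> M_n(R) is a universal
   arrow from A to the functor M_n(-), i.e. R = nroot A and mu = mu_{A,n}. *)
Definition is_nroot (k : fieldType) (n : nat) (A R : kalg k)
    (mu : khom A (matk R n)) : Prop :=
  forall (C : kalg k) (g : khom A (matk C n)),
    exists g' : khom R C,
      (forall a : A, g a = map_mx g' (mu a : 'M[R]_n)) /\
      (forall g'' : khom R C, (forall a : A, g a = map_mx g'' (mu a : 'M[R]_n)) ->
         forall r : R, g'' r = g' r).

From HB Require Import structures.
From mathcomp Require Import all_boot all_order all_algebra.
From mathcomp Require Import boolp.
Set Implicit Arguments. Unset Strict Implicit. Unset Printing Implicit Defensive.
Import GRing.Theory.
Local Open Scope ring_scope.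

(** (i) <-> (iii): maps M_n(B) -> M_n(C) correspond to maps from the n-th root of
    M_n(B) to C, and a map g : M_n(B) -> C is recovered from the map into M_n(C)
    obtained by composing with scalar matrices, which is injective since n >= 1.
    (i) -> (ii): applying M_n(-) shows that f' is epi; an epimorphism of
    k-algebras is also epi against arbitrary ring maps g, h, since these are
    k-algebra maps into the centralizer of g(k) = h(k).
    (ii) -> (i): from b%:M = \sum_l e_li x e_jl for b = x i j, maps agreeing on the
    matrix units and on f(A) agree on the scalar matrices of the entries of f(A);
    so g and h composed with scalar matrices and f' are adjoint to the same map
    A -> M_n(C), hence equal; as f' is epi, g and h agree on all scalar
    matrices, hence everywhere. *)

Section KHomConstructions.
Variable k : fieldType.

Definition khom_comp (R S T : kalg k) (f : khom R S) (g : khom S T) : khom R T :=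
  @KHom k R T (g \o f : {rmorphism R -> T}) (fun c => etrans (congr1 g (khomP f c)) (khomP g c)).

Lemma map_mx_khom_comp (R S T : kalg k) (f : khom R S) (g : khom S T) m n
    (M : 'M[R]_(m, n)) :
  map_mx (khom_comp f g) M = map_mx g (map_mx f M).
Proof. by apply/matrixP => i j; rewrite !mxE. Qed.

Fact khom_map_mxP (R S : kalg k) (phi : khom R S) (n : nat) (c : k) :
  map_mx phi (kemb (matk R n) c : 'M[R]_n) = (kemb (matk S n) c : 'M[S]_n).
Proof. by rewrite /= map_scalar_mx khomP. Qed.

Definition khom_map_mx (R S : kalg k) (phi : khom R S) (n : nat) :
  khom (matk R n) (matk S n) :=
  @KHom k (matk R n) (matk S n) (map_mx phi : {rmorphism 'M[R]_n -> 'M[S]_n})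
    (@khom_map_mxP R S phi n).

Definition khom_scalar_mx (R : kalg k) (n : nat) : khom R (matk R n) :=
  @KHom k R (matk R n) (@scalar_mx R n : {rmorphism R -> 'M[R]_n}) (fun c => erefl).

End KHomConstructions.

Section KCentralizer.
Variables (k : fieldType) (C : pzRingType) (phi : {rmorphism k -> C}).

Definition kcent_pred : pred C := fun x => `[< forall c, x * phi c = phi c * x >].

Lemma kcent_predP (x : C) : x \in kcent_pred <-> forall c, x * phi c = phi c * x.
Proof. by rewrite unfold_in; split=> /asboolP. Qed.

Fact kcent_subring_closed : subring_closed kcent_pred.
Proof.
split=> [|x y /kcent_predP Hx /kcent_predP Hy|x y /kcent_predP Hx /kcent_predP Hy];
  apply/kcent_predP => c; first by rewrite mul1r mulr1.
  by rewrite mulrBl mulrBr Hx Hy.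
by rewrite -mulrA Hy mulrA Hx mulrA.
Qed.

Record kcent := KCent {kcent_val :> C; kcent_valP : kcent_val \in kcent_pred}.
HB.instance Definition _ := [isSub for kcent_val].
HB.instance Definition _ := [Choice of kcent by <:].
HB.instance Definition _ :=
  GRing.SubChoice_isSubPzRing.Build C kcent_pred kcent kcent_subring_closed.

Section Corestriction.
Variables (R : pzRingType) (g : {rmorphism R -> C}) (gP : forall x, g x \in kcent_pred).

Definition kcent_corestr (x : R) : kcent := KCent (gP x).

Fact kcent_corestr_zmod : zmod_morphism kcent_corestr.
Proof. by move=> x y; apply: val_inj; rewrite /= rmorphB. Qed.

Fact kcent_corestr_monoid : monoid_morphism kcent_corestr.
Proof. by split=> [|x y]; apply: val_inj; rewrite /= ?rmorph1 ?rmorphM. Qed.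

HB.instance Definition _ :=
  GRing.isZmodMorphism.Build R kcent kcent_corestr kcent_corestr_zmod.
HB.instance Definition _ :=
  GRing.isMonoidMorphism.Build R kcent kcent_corestr kcent_corestr_monoid.

End Corestriction.

Lemma phi_kcent (c : k) : phi c \in kcent_pred.
Proof. by apply/kcent_predP => d; rewrite -!rmorphM mulrC. Qed.

Fact kcent_emb_central (c : k) (x : kcent) :
  kcent_corestr phi_kcent c * x = x * kcent_corestr phi_kcent c.
Proof. by apply: val_inj; rewrite /= ((kcent_predP _).1 (kcent_valP x)). Qed.

Definition kcent_kalg : kalg k := @KAlg k kcent (kcent_corestr phi_kcent) kcent_emb_central.

Section KHomCorestriction.
Variables (R : kalg k) (g : {rmorphism R -> C}) (gk : forall c, g (kemb R c) = phi c).

Lemma khom_kcent_pred (x : R) : g x \in kcent_pred.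
Proof. by apply/kcent_predP => c; rewrite -gk -!rmorphM kemb_central. Qed.

Definition khom_kcent : khom R kcent_kalg :=
  @KHom k R kcent_kalg (kcent_corestr khom_kcent_pred)
    (fun c => @val_inj _ _ _ (kcent_corestr khom_kcent_pred (kemb R c))
                (kcent_corestr phi_kcent c) (gk c)).

End KHomCorestriction.
End KCentralizer.

Section MatrixUnits.
Variables (R : pzRingType) (n : nat).

Lemma scalar_mx_inj (n_gt0 : (0 < n)%N) : injective (@scalar_mx R n).
Proof. by move=> a b /matrixP/(_ (Ordinal n_gt0) (Ordinal n_gt0)); rewrite !mxE eqxx. Qed.

Lemma delta_mx_sandwichE (x : 'M[R]_n) (i j l l' p q : 'I_n) :
  (delta_mx l i *m x *m delta_mx j l') p q = x i j *+ ((p == l) && (q == l')).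
Proof.
rewrite mxE (bigD1 j) //= big1 ?addr0; last first.
  by move=> m /negbTE Hm; rewrite [delta_mx j l' m q]mxE Hm mulr0.
rewrite mxE (bigD1 i) //= big1 ?addr0; last first.
  by move=> m /negbTE Hm; rewrite [delta_mx l i p m]mxE Hm andbF mul0r.
rewrite !mxE !eqxx andbT /=.
by case: (p == l); case: (q == l'); rewrite ?mul1r ?mulr1 ?mul0r ?mulr0.
Qed.

Lemma scalar_mx_entry_sandwich (x : 'M[R]_n) (i j : 'I_n) :
  (x i j)%:M = \sum_l delta_mx l i *m x *m delta_mx j l :> 'M_n.
Proof.
apply/matrixP => p q; rewrite summxE mxE.
under eq_bigr do rewrite delta_mx_sandwichE.
rewrite (bigD1 p) //= big1 ?addr0 => [|l /negbTE nlp]; last by rewrite eq_sym nlp.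
by rewrite eqxx eq_sym.
Qed.

Section RMorphisms.
Variables (C : pzRingType) (g h : {rmorphism 'M[R]_n -> C}).
Hypothesis eq_gh_delta : forall i j : 'I_n, g (delta_mx i j) = h (delta_mx i j).

Lemma eq_rmorph_scalar_entry (x : 'M[R]_n) :
  g x = h x -> forall i j, g (x i j)%:M = h (x i j)%:M.
Proof.
move=> eq_ghx i j; rewrite scalar_mx_entry_sandwich !rmorph_sum.
by apply: eq_bigr => l _; rewrite !rmorphM eq_ghx !eq_gh_delta.
Qed.

Lemma eq_rmorph_matrix : (forall a : R, g a%:M = h a%:M) -> g =1 h.
Proof.
move=> eq_gh_scalar x; rewrite (matrix_sum_delta x) !rmorph_sum.
apply: eq_bigr => i _; rewrite !rmorph_sum; apply: eq_bigr => j _.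
by rewrite -mul_scalar_mx !rmorphM eq_gh_scalar eq_gh_delta.
Qed.

End RMorphisms.
End MatrixUnits.

Section KEpimorphisms.
Variable k : fieldType.

Lemma kepi_in_dominion (R E : kalg k) (f : khom R E) :
  kepi f -> forall x : E, in_dominion (fun y : E => exists r, f r = y) x.
Proof.
move=> epi_f x C g h eq_gh_f.
pose phi := (g \o kemb E : {rmorphism k -> C}).
have hk c : h (kemb E c) = phi c.
  by rewrite /phi /= -(khomP f) eq_gh_f //; exists (kemb R c).
have epi_fx := epi_f _ (@khom_kcent _ _ phi _ g (fun c => erefl)) (khom_kcent hk) _ x.
by apply: (congr1 val (epi_fx _)) => r; apply: val_inj; apply: eq_gh_f; exists r.
Qed.

Lemma nroot_uniq (n : nat) (A R : kalg k) (mu : khom A (matk R n)) :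
  is_nroot mu -> forall (C : kalg k) (g1 g2 : khom R C),
  (forall a, map_mx g1 (mu a : 'M[R]_n) = map_mx g2 (mu a : 'M[R]_n)) -> g1 =1 g2.
Proof.
move=> univ_mu C g1 g2 eq_g12 r.
have [g' [_ uniq_g']] := univ_mu C (khom_comp mu (khom_map_mx g1 n)).
by rewrite (uniq_g' g1) ?(uniq_g' g2).
Qed.

End KEpimorphisms.

Section MatrixReductionEpi.
Variables (k : fieldType) (A B : kalg k) (n : nat).
Hypothesis n_gt0 : (0 < n)%N.
Variables (RA : kalg k) (muA : khom A (matk RA n)) (RMB : kalg k)
  (muMB : khom (matk B n) (matk RMB n)) (f : khom A (matk B n)).
Hypotheses (univ_muA : is_nroot muA) (univ_muMB : is_nroot muMB).
Variables (f' : khom RA B) (rf : khom RA RMB).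
Hypothesis f_adjoint : forall a : A, f a = map_mx f' (muA a : 'M[RA]_n).
Hypothesis rf_natural : forall a : A, map_mx rf (muA a : 'M[RA]_n) = muMB (f a).

Lemma kepi_adjoint : kepi f -> kepi f'.
Proof.
move=> epi_f C g h eq_gh_f' b; apply: (scalar_mx_inj n_gt0).
rewrite -!map_scalar_mx; apply: (epi_f _ (khom_map_mx g n) (khom_map_mx h n)) => a /=.
by rewrite f_adjoint -!map_mx_comp; apply/matrixP => i j; rewrite !mxE /= eq_gh_f'.
Qed.

Lemma kepi_nroot : kepi f -> kepi rf.
Proof.
move=> epi_f C g h eq_gh_rf; apply: (nroot_uniq univ_muMB) => x.
apply: (epi_f _ (khom_comp muMB (khom_map_mx g n)) (khom_comp muMB (khom_map_mx h n))) => a /=.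
by rewrite -rf_natural -!map_mx_comp; apply/matrixP => i j; rewrite !mxE /= eq_gh_rf.
Qed.

Lemma kepi_of_nroot : kepi rf -> kepi f.
Proof.
move=> epi_rf C g h eq_gh_f x; apply: (scalar_mx_inj n_gt0).
pose G := khom_comp g (khom_scalar_mx C n); pose H := khom_comp h (khom_scalar_mx C n).
have [g' [G_adj _]] := univ_muMB G.
have [h' [H_adj _]] := univ_muMB H.
have eq_gh'_rf : forall r, g' (rf r) = h' (rf r).
  apply: (nroot_uniq univ_muA (g1 := khom_comp rf g') (g2 := khom_comp rf h')) => a.
  by rewrite !map_mx_khom_comp rf_natural -G_adj -H_adj /= eq_gh_f.
change (G x = H x); rewrite G_adj H_adj.
by apply/matrixP => i j; rewrite !mxE; exact: (epi_rf _ g' h' eq_gh'_rf).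
Qed.

Lemma kepi_of_dominion_adjoint :
  (forall i j : 'I_n,
     in_dominion (fun x : 'M[B]_n => exists a : A, f a = x) (delta_mx i j)) ->
  kepi f' -> kepi f.
Proof.
move=> dom_delta epi_f' C g h eq_gh_f.
have eq_gh_delta i j : g (delta_mx i j) = h (delta_mx i j).
  by apply: dom_delta => _ [a <-]; apply: eq_gh_f.
pose gs := khom_comp (khom_scalar_mx B n) g; pose hs := khom_comp (khom_scalar_mx B n) h.
apply: (eq_rmorph_matrix eq_gh_delta) => b; apply: (epi_f' _ gs hs) => r.
apply: (nroot_uniq univ_muA (g1 := khom_comp f' gs) (g2 := khom_comp f' hs)) => a.
rewrite !map_mx_khom_comp -f_adjoint; apply/matrixP => i j; rewrite !mxE.
exact: (eq_rmorph_scalar_entry eq_gh_delta (eq_gh_f a)).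
Qed.

End MatrixReductionEpi.

Theorem mainTheorem17 (k : fieldType) (A B : kalg k) (n : nat) (n_gt0 : (0 < n)%N)
  (RA : kalg k) (muA : khom A (matk RA n)) (HRA : is_nroot muA)
  (RMB : kalg k) (muMB : khom (matk B n) (matk RMB n)) (HRMB : is_nroot muMB)
  (f : khom A (matk B n))
  (f' : khom RA B) (Hf' : forall a : A, f a = map_mx f' (muA a : 'M[RA]_n))
  (rf : khom RA RMB)
  (Hrf : forall a : A, map_mx rf (muA a : 'M[RA]_n) = muMB (f a)) :
  [<-> kepi f;
       (forall i j : 'I_n,
          in_dominion (fun x : 'M[B]_n => exists a : A, f a = x) (delta_mx i j))
       /\ kepi f';
       kepi rf].
Proof.
have i_ii (epi_f : kepi f) :=
  conj (fun i j => kepi_in_dominion epi_f (delta_mx i j)) (kepi_adjoint n_gt0 Hf' epi_f).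
have ii_iii := fun '(conj dom_delta epi_f') =>
  kepi_nroot HRMB Hrf (kepi_of_dominion_adjoint HRA Hf' dom_delta epi_f').
have iii_i := kepi_of_nroot n_gt0 HRA HRMB Hrf.
by split; [exact: i_ii | split; [exact: ii_iii | exact: iii_i]].
Qed.
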